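(* Suppose $f$ is an infinitely renormalizable $\mathcal C^3$ dissipative gap mapping. Then for every $\varepsilon>0$ there is $n_0\in\mathbb N$ such that for all $n\ge n_0$ there exists an affine gap mapping $g_n$ (both branches affine) with $\|\mathcal R^nf-g_n\|_{\mathcal C^3}\le\varepsilon$.
   Context: A dissipative gap map is a map $f:[a_L,a_R]\setminus\{0\}\to[a_L,a_R]$, $a_L<0<a_R$, continuous and strictly increasing on $[a_L,0)$ and $(0,a_R]$, with $f(0^-)=a_R$, $f(0^+)=a_L$, $f(a_L)>f(a_R)$, differentiable with $0<f'\le\nu<1$. With domain $[b-1,b]$, branches $f_L,f_R$ and gap $G=(f_R(b),f_L(b-1))$, $f$ is renormalizable if there is a minimal $k\ge1$ with $0\notin\bigcup_{i=0}^k\overline{f^i(G)}$ and either $\overline G,\dots,\overline{f^{k-1}(G)}\subset(b-1,0)$, $\overline{f^k(G)}\subset(0,b)$, or the same with sides exchanged. With $0^+_j=f^{j-1}(b-1)$, $0^-_j=f^{j-1}(b)$, $I'=[0^+_{k+1},0^-_{k+2}]$ in the first case and $I'=[0^+_{k+2},0^-_{k+1}]$ in the second; the renormalization is $\mathcal Rf(x)=R(|I'|x)/|I'|$ where $R$ is the first return map of $f$ to $I'$ (again a dissipative gap map). $f$ is infinitely renormalizable if $\mathcal R^nf$ is defined for all $n$. *)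

From Stdlib Require Import Reals Lra.
From Coquelicot Require Import Coquelicot.
Open Scope R_scope.

Fixpoint iterf (n : nat) (f : R -> R) (x : R) : R :=
  match n with O => x | S m => f (iterf m f x) end.

Definition C3 (H : R -> R) : Prop :=
  (forall (k : nat) (x : R), (k <= 3)%nat -> ex_derive_n H k x) /\
  (forall x : R, continuous (Derive_n H 3) x).

Definition in_closure (S : R -> Prop) (x : R) : Prop :=
  forall eps : R, 0 < eps -> exists y, S y /\ Rabs (y - x) < eps.

Definition cont_within (D : R -> Prop) (f : R -> R) (x : R) : Prop :=
  forall eps : R, 0 < eps -> exists delta : R, 0 < delta /\
    forall y, D y -> Rabs (y - x) < delta -> Rabs (f y - f x) < eps.

Definition left_branch (b x : R) : Prop := b - 1 <= x < 0.
Definition right_branch (b x : R) : Prop := 0 < x <= b.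

(* A gap map with domain [b-1,b] \ {0} (only values on that set matter). *)
Definition gap_map (f : R -> R) (b : R) : Prop :=
  0 < b < 1 /\
  (forall x, left_branch b x -> cont_within (left_branch b) f x) /\
  (forall x, right_branch b x -> cont_within (right_branch b) f x) /\
  (forall x y, left_branch b x -> left_branch b y -> x < y -> f x < f y) /\
  (forall x y, right_branch b x -> right_branch b y -> x < y -> f x < f y) /\
  filterlim f (at_left 0) (locally b) /\
  filterlim f (at_right 0) (locally (b - 1)) /\
  f b < f (b - 1) /\
  (forall x, b - 1 <= x <= b -> x <> 0 -> b - 1 <= f x <= b).

Definition affine_gap_map (g : R -> R) (b : R) : Prop :=
  gap_map g b /\
  exists sL cL sR cR : R,
    (forall x, left_branch b x -> g x = sL * x + cL) /\
    (forall x, right_branch b x -> g x = sR * x + cR).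

(* C^3 dissipative gap map on [b-1,b]: the branches are C^3 on the closed
   intervals [b-1,0] and [0,b] (expressed as restrictions of C^3 functions
   FL, FR on R), with 0 < f' <= nu < 1. *)
Definition C3_dissipative_gap_map (f : R -> R) (b : R) : Prop :=
  gap_map f b /\
  exists FL FR : R -> R,
    C3 FL /\ C3 FR /\
    (forall x, left_branch b x -> f x = FL x) /\
    (forall x, right_branch b x -> f x = FR x) /\
    exists nu : R, nu < 1 /\
      (forall x, left_branch b x -> 0 < Derive FL x <= nu) /\
      (forall x, right_branch b x -> 0 < Derive FR x <= nu).

Definition gap_image (f : R -> R) (b : R) (i : nat) (y : R) : Prop :=
  exists x, f b < x < f (b - 1) /\ y = iterf i f x.

Definition gap_cl_in (f : R -> R) (b : R) (i : nat) (lo hi : R) : Prop :=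
  forall y, in_closure (gap_image f b i) y -> lo < y < hi.

(* Renormalization combinatorics with return time k:
   left = true : cl G,...,cl f^(k-1) G in (b-1,0), cl f^k G in (0,b);
   left = false: the same with the sides exchanged.
   (0 notin cl f^i G for i <= k follows.) *)
Definition renorm_type (f : R -> R) (b : R) (k : nat) (left : bool) : Prop :=
  (1 <= k)%nat /\
  if left then
    (forall i, (i < k)%nat -> gap_cl_in f b i (b - 1) 0) /\ gap_cl_in f b k 0 b
  else
    (forall i, (i < k)%nat -> gap_cl_in f b i 0 b) /\ gap_cl_in f b k (b - 1) 0.

Definition renormalizable_with (f : R -> R) (b : R) (k : nat) (left : bool) : Prop :=
  renorm_type f b k left /\
  (forall k' l', (k' < k)%nat -> ~ renorm_type f b k' l').

(* 0^+_j = f^(j-1)(b-1), 0^-_j = f^(j-1)(b); endpoints of I' *)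
Definition Iprime_lo (f : R -> R) (b : R) (k : nat) (left : bool) : R :=
  if left then iterf k f (b - 1) else iterf (S k) f (b - 1).
Definition Iprime_hi (f : R -> R) (b : R) (k : nat) (left : bool) : R :=
  if left then iterf (S k) f b else iterf k f b.

(* g on [b'-1,b'] is the renormalization R f of f: g(x) = R(|I'| x)/|I'|
   where R is the first return map of f to I'. *)
Definition is_renormalization (f : R -> R) (b : R) (g : R -> R) (b' : R) : Prop :=
  exists (k : nat) (left : bool),
    renormalizable_with f b k left /\
    let lo := Iprime_lo f b k left in
    let hi := Iprime_hi f b k left in
    let L := hi - lo in
    (lo < hi) /\
    b' = hi / L /\
    forall x, b' - 1 <= x <= b' -> x <> 0 ->
      exists r : nat, (1 <= r)%nat /\
        lo <= iterf r f (L * x) <= hi /\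
        (forall j, (1 <= j)%nat -> (j < r)%nat ->
            ~ (lo <= iterf j f (L * x) <= hi)) /\
        g x = iterf r f (L * x) / L.

(* ||f - g||_{C^3} <= eps on the branches [b-1,0) and (0,b] (max over
   derivatives of order 0..3 of the sup norm on the closed branches). *)
Definition C3_dist_le (f g : R -> R) (b eps : R) : Prop :=
  exists HL HR : R -> R,
    C3 HL /\ C3 HR /\
    (forall x, left_branch b x -> HL x = f x - g x) /\
    (forall x, right_branch b x -> HR x = f x - g x) /\
    (forall (j : nat) x, (j <= 3)%nat -> b - 1 <= x <= 0 -> Rabs (Derive_n HL j x) <= eps) /\
    (forall (j : nat) x, (j <= 3)%nat -> 0 <= x <= b -> Rabs (Derive_n HR j x) <= eps).

From Stdlib Require Import Reals Lra Lia.
From Coquelicot Require Import Coquelicot.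
Open Scope R_scope.

(* The first return map of a renormalization is a composition of at least two branches
   of f, so the bound nu on |f'| is squared at each step.  Along compositions of many
   branches the chain rule keeps |f''| and |f'''| inside the cone (c A, c (T + 3 c A^2))
   with c = 1/(1 - nu), and the last branch contributes one more factor nu; rescaling by
   |I'| <= 1 does not increase these bounds.  Hence all derivatives of order 1 to 3 of
   R^n f tend to 0, and R^n f is C^3-close to the affine gap map with a small slope and
   intercepts B n, B n - 1.  The second combinatorial type of renormalization is reduced
   to the first by conjugating with x |-> -x. *)

(** * Jets *)

(* A C^3 function packaged with its first three derivatives, so that the chain rule can
   be computed symbolically ([jet_comp]). *)
Record jet := Jet { jet0 : R -> R; jet1 : R -> R; jet2 : R -> R; jet3 : R -> R }.

Definition is_jet (s : jet) : Prop :=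
  (forall x, is_derive (jet0 s) x (jet1 s x)) /\
  (forall x, is_derive (jet1 s) x (jet2 s x)) /\
  (forall x, is_derive (jet2 s) x (jet3 s x)) /\
  (forall x, continuous (jet3 s) x).

Definition jet_nth (s : jet) (j : nat) : R -> R :=
  match j with 0 => jet0 s | 1 => jet1 s | 2 => jet2 s | _ => jet3 s end.

Definition jet_comp (h p : jet) : jet := Jet
  (fun x => jet0 h (jet0 p x))
  (fun x => jet1 h (jet0 p x) * jet1 p x)
  (fun x => jet2 h (jet0 p x) * (jet1 p x * jet1 p x) + jet1 h (jet0 p x) * jet2 p x)
  (fun x => jet3 h (jet0 p x) * (jet1 p x * (jet1 p x * jet1 p x))
            + 3 * (jet2 h (jet0 p x) * (jet1 p x * jet2 p x)) + jet1 h (jet0 p x) * jet3 p x).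

Fixpoint jet_iter (h : jet) (n : nat) (p : jet) : jet :=
  match n with O => p | S m => jet_comp h (jet_iter h m p) end.

Definition jet_rescale (L : R) (s : jet) : jet := Jet
  (fun x => jet0 s (L * x) / L) (fun x => jet1 s (L * x))
  (fun x => L * jet2 s (L * x)) (fun x => L ^ 2 * jet3 s (L * x)).

Definition jet_sub_affine (s : jet) (a c : R) : jet := Jet
  (fun x => jet0 s x - (a * x + c)) (fun x => jet1 s x - a) (jet2 s) (jet3 s).

Definition jet_of_C3 (H : R -> R) : jet :=
  Jet H (Derive_n H 1) (Derive_n H 2) (Derive_n H 3).

Ltac rewrite_derives :=
  repeat match goal with
  | |- context [Derive ?F ?y] =>
      match goal with H : forall t, is_derive _ t _ |- _ =>
        rewrite (is_derive_unique F y _ (H y)) end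
  end.

Ltac derive_from_hyps :=
  auto_derive; [repeat split; eexists; eauto | rewrite_derives].

Ltac split_continuity :=
  repeat match goal with
  | |- continuous (fun y => @?a y + @?b y) _ => apply (continuous_plus (V := R_NormedModule) a b)
  | |- continuous (fun y => @?a y * @?b y) _ => apply (continuous_mult (K := R_AbsRing) a b)
  | |- continuous (fun _ => ?c) _ => apply continuous_const
  | |- continuous (fun y => y) _ => apply continuous_id
  end.

Lemma is_jet_continuous (s : jet) : is_jet s -> forall j x, continuous (jet_nth s j) x.
Proof.
  intros (H0 & H1 & H2 & H3) [|[|[|j]]] x; simpl; try apply H3;
    apply (ex_derive_continuous (V := R_NormedModule)); eexists; eauto.
Qed.

Lemma is_jet_comp (h p : jet) : is_jet h -> is_jet p -> is_jet (jet_comp h p).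
Proof.
  intros Hh Hp.
  pose proof (is_jet_continuous h Hh) as Ch; pose proof (is_jet_continuous p Hp) as Cp.
  destruct Hh as (h1 & h2 & h3 & _); destruct Hp as (p1 & p2 & p3 & _).
  split; [|split; [|split]]; intro x; cbn [jet0 jet1 jet2 jet3 jet_comp];
    try (derive_from_hyps; ring).
  assert (Cq : forall j, continuous (fun y => jet_nth h j (jet0 p y)) x).
  { intro j; apply (continuous_comp (jet0 p)); [apply (Cp 0%nat)|apply Ch]. }
  split_continuity.
  all: first [exact (Cq 1%nat) | exact (Cq 2%nat) | exact (Cq 3%nat)
             |exact (Cp 1%nat x) | exact (Cp 2%nat x) | exact (Cp 3%nat x)].
Qed.

Lemma is_jet_derive (s : jet) :
  is_jet s -> forall j x, (j < 3)%nat -> is_derive (jet_nth s j) x (jet_nth s (S j) x).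
Proof. intros (H0 & H1 & H2 & _) [|[|[|j]]] x Hj; simpl; auto; lia. Qed.

Lemma Derive_n_jet (s : jet) :
  is_jet s -> forall j x, (j <= 3)%nat -> Derive_n (jet0 s) j x = jet_nth s j x.
Proof.
  intros Hs j; induction j as [|j IH]; intros x Hj; [reflexivity|].
  simpl; rewrite (Derive_ext _ (jet_nth s j)) by (intro; apply IH; lia).
  apply is_derive_unique, is_jet_derive; auto; lia.
Qed.

Lemma is_jet_C3 (s : jet) : is_jet s -> C3 (jet0 s).
Proof.
  intros Hs; split.
  - intros [|j] x Hj; simpl; [exact I|].
    exists (jet_nth s (S j) x).
    apply (is_derive_ext (jet_nth s j)); [intro; symmetry; apply Derive_n_jet; auto; lia|].
    apply is_jet_derive; auto; lia.
  - intro x; apply (continuous_ext (jet3 s)); [intro; symmetry; apply (Derive_n_jet s Hs 3)|].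
    + lia.
    + apply (is_jet_continuous s Hs 3).
Qed.

Lemma is_jet_of_C3 (H : R -> R) : C3 H -> is_jet (jet_of_C3 H).
Proof.
  intros [Hd Hc]; split; [|split; [|split]]; intro x; try apply Hc;
    apply Derive_correct; [apply (Hd 1%nat) | apply (Hd 2%nat) | apply (Hd 3%nat)]; lia.
Qed.

Lemma is_jet_rescale (L : R) (s : jet) : L <> 0 -> is_jet s -> is_jet (jet_rescale L s).
Proof.
  intros HL Hs; pose proof (is_jet_continuous s Hs 3) as C3s.
  destruct Hs as (H0 & H1 & H2 & _).
  split; [|split; [|split]]; intro x; cbn [jet0 jet1 jet2 jet3 jet_rescale].
  - derive_from_hyps; field; exact HL.
  - derive_from_hyps; ring.
  - derive_from_hyps; ring.
  - split_continuity; apply (continuous_comp (fun y => L * y)); [split_continuity | apply C3s].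
Qed.

Lemma is_jet_sub_affine (s : jet) (a c : R) : is_jet s -> is_jet (jet_sub_affine s a c).
Proof.
  intros (H0 & H1 & H2 & H3); split; [|split; [|split]]; intro x;
    cbn [jet0 jet1 jet2 jet3 jet_sub_affine]; auto; derive_from_hyps; ring.
Qed.

Lemma jet0_iter (h p : jet) n x : jet0 (jet_iter h n p) x = iterf n (jet0 h) (jet0 p x).
Proof. induction n as [|n IH]; simpl; [reflexivity|]; now rewrite IH. Qed.

Lemma is_jet_iter (h p : jet) n : is_jet h -> is_jet p -> is_jet (jet_iter h n p).
Proof. intros Hh Hp; induction n; simpl; auto using is_jet_comp. Qed.

Lemma jet_lipschitz (s : jet) a c M x y :
  is_jet s -> (forall t, a <= t <= c -> Rabs (jet1 s t) <= M) ->
  a <= x <= c -> a <= y <= c -> Rabs (jet0 s x - jet0 s y) <= M * Rabs (x - y).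
Proof.
  intros Hs HM Hx Hy.
  destruct (MVT_gen (jet0 s) y x (jet1 s)) as (t & Ht & ->).
  - intros; apply Hs.
  - intros; apply continuity_pt_filterlim, (is_jet_continuous s Hs 0).
  - rewrite Rabs_mult; apply Rmult_le_compat_r; [apply Rabs_pos|]; apply HM.
    pose proof (Rmin_glb y x a); pose proof (Rmax_lub y x c); lra.
Qed.

Lemma jet_bounds_on_interval (s : jet) a c :
  is_jet s -> exists A T, forall x, a <= x <= c -> Rabs (jet2 s x) <= A /\ Rabs (jet3 s x) <= T.
Proof.
  intros Hs.
  destruct (bounded_continuity (jet2 s) a c) as (A & HA); [intros; apply (is_jet_continuous s Hs 2)|].
  destruct (bounded_continuity (jet3 s) a c) as (T & HT); [intros; apply (is_jet_continuous s Hs 3)|].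
  exists A, T; intros x Hx; split; left; [exact (HA x Hx) | exact (HT x Hx)].
Qed.

(** * Chain-rule bounds *)

Definition jet_bound_at (s : jet) (x nu A T : R) : Prop :=
  Rabs (jet1 s x) <= nu /\ Rabs (jet2 s x) <= A /\ Rabs (jet3 s x) <= T.

Lemma jet_bound_at_nonneg {s : jet} {x nu A T : R} :
  jet_bound_at s x nu A T -> 0 <= nu /\ 0 <= A /\ 0 <= T.
Proof.
  intros (H1 & H2 & H3).
  pose proof (Rabs_pos (jet1 s x)); pose proof (Rabs_pos (jet2 s x));
    pose proof (Rabs_pos (jet3 s x)); lra.
Qed.

Lemma jet_bound_at_weaken (s : jet) x nu A T nu' A' T' :
  nu <= nu' -> A <= A' -> T <= T' -> jet_bound_at s x nu A T -> jet_bound_at s x nu' A' T'.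
Proof. unfold jet_bound_at; lra. Qed.

Lemma jet_bound_at_comp {h p : jet} {x nu1 A1 T1 nu2 A2 T2 : R} :
  jet_bound_at h (jet0 p x) nu1 A1 T1 -> jet_bound_at p x nu2 A2 T2 ->
  jet_bound_at (jet_comp h p) x (nu1 * nu2) (A1 * (nu2 * nu2) + nu1 * A2)
    (T1 * (nu2 * (nu2 * nu2)) + 3 * (A1 * (nu2 * A2)) + nu1 * T2).
Proof.
  intros (u1 & u2 & u3) (v1 & v2 & v3); unfold jet_bound_at; cbn [jet1 jet2 jet3 jet_comp].
  split; [|split].
  - rewrite Rabs_mult.
    apply Rmult_le_compat; first [apply Rabs_pos | lra].
  - eapply Rle_trans; [apply Rabs_triang|]; rewrite !Rabs_mult.
    apply Rplus_le_compat; repeat apply Rmult_le_compat; repeat apply Rmult_le_pos;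
      first [apply Rabs_pos | lra].
  - eapply Rle_trans; [apply Rabs_triang|].
    apply Rplus_le_compat; [eapply Rle_trans; [apply Rabs_triang|]; apply Rplus_le_compat|];
      rewrite !Rabs_mult, ?(Rabs_right 3) by lra;
      repeat apply Rmult_le_compat; repeat apply Rmult_le_pos; first [apply Rabs_pos | lra].
Qed.

(* Third-derivative bound of the invariant cone; c = 1/(1 - nu) sums the geometric series
   in nu produced by long compositions of branches. *)
Definition cone_bound3 (c A T : R) : R := c * (T + 3 * c * A * A).

Lemma jet_bound_at_cone (s : jet) x nu A T c :
  nu <= 1 -> 1 <= c * (1 - nu) ->
  jet_bound_at s x nu A T -> jet_bound_at s x nu (c * A) (cone_bound3 c A T).
Proof.
  intros Hnu Hc Hs; unfold cone_bound3.
  destruct (jet_bound_at_nonneg Hs) as (Hnu0 & HA & HT).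
  assert (Hc1 : 1 <= c) by (destruct (Rle_or_lt c 0); nra).
  eapply jet_bound_at_weaken; [| | |exact Hs]; nra.
Qed.

Lemma jet_bound_at_comp_cone (h p : jet) x nu A T c :
  nu <= 1 -> 1 <= c * (1 - nu) ->
  jet_bound_at h (jet0 p x) nu A T -> jet_bound_at p x nu (c * A) (cone_bound3 c A T) ->
  jet_bound_at (jet_comp h p) x nu (c * A) (cone_bound3 c A T).
Proof.
  intros Hnu Hc Hh Hp; unfold cone_bound3 in *.
  destruct (jet_bound_at_nonneg Hh) as (Hnu0 & HA & HT).
  assert (Hc1 : 1 <= c) by (destruct (Rle_or_lt c 0); nra).
  assert (HK : 0 <= T + 3 * c * A * A) by (assert (0 <= c * A * A) by nra; lra).
  assert (Hnu2 : nu * nu <= 1) by nra.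
  assert (Hnu3 : nu * (nu * nu) <= 1) by nra.
  assert (T * (nu * (nu * nu)) <= T) by nra.
  assert (3 * (A * (nu * (c * A))) <= 3 * c * A * A) by nra.
  eapply jet_bound_at_weaken; [| | |exact (jet_bound_at_comp Hh Hp)]; nra.
Qed.

Lemma jet_bound_at_comp_contract (h p : jet) x nu A T c :
  nu <= 1 -> 1 <= c ->
  jet_bound_at h (jet0 p x) nu A T -> jet_bound_at p x nu (c * A) (cone_bound3 c A T) ->
  jet_bound_at (jet_comp h p) x (nu * nu) (2 * c * A * nu) (2 * cone_bound3 c A T * nu).
Proof.
  intros Hnu Hc Hh Hp; unfold cone_bound3 in *.
  destruct (jet_bound_at_nonneg Hh) as (Hnu0 & HA & HT).
  assert (HAn : 0 <= A * nu) by nra.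
  assert (HTn : 0 <= T * nu) by nra.
  assert (HAAn : 0 <= c * A * A * nu) by (apply Rmult_le_pos; nra).
  eapply jet_bound_at_weaken; [| | |exact (jet_bound_at_comp Hh Hp)];
    [lra | nra |].
  assert (T * nu * (nu * nu) <= T * nu * 1) by (apply Rmult_le_compat_l; nra).
  assert (T * nu <= c * (T * nu)) by nra.
  assert (c * A * A * nu <= c * (c * A * A * nu)) by nra.
  nra.
Qed.

Lemma jet_bound_at_iter_contract (h p : jet) x n nu A T c :
  (1 <= n)%nat -> nu <= 1 -> 1 <= c * (1 - nu) ->
  (forall j, (j < n)%nat -> jet_bound_at h (iterf j (jet0 h) (jet0 p x)) nu A T) ->
  jet_bound_at p x nu (c * A) (cone_bound3 c A T) ->
  jet_bound_at (jet_iter h n p) x (nu * nu) (2 * c * A * nu) (2 * cone_bound3 c A T * nu).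
Proof.
  intros Hn Hnu Hc Hh Hp.
  assert (Hc1 : 1 <= c).
  { destruct (jet_bound_at_nonneg Hp); destruct (Rle_or_lt c 0); nra. }
  destruct n as [|n]; [lia|]; simpl.
  apply jet_bound_at_comp_contract; [exact Hnu | exact Hc1 | rewrite jet0_iter; apply Hh; lia |].
  clear Hn; induction n as [|n IH]; [exact Hp|]; simpl.
  apply jet_bound_at_comp_cone; [exact Hnu | exact Hc | rewrite jet0_iter; apply Hh; lia |].
  apply IH; intros j Hj; apply Hh; lia.
Qed.

Lemma jet_bound_at_rescale (L : R) (s : jet) x nu A T :
  Rabs L <= 1 -> jet_bound_at s (L * x) nu A T -> jet_bound_at (jet_rescale L s) x nu A T.
Proof.
  intros HL (H1 & H2 & H3); unfold jet_bound_at; cbn [jet1 jet2 jet3 jet_rescale].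
  rewrite !Rabs_mult, <- RPow_abs.
  pose proof (Rabs_pos L); pose proof (Rabs_pos (jet2 s (L * x)));
    pose proof (Rabs_pos (jet3 s (L * x))).
  split; [|split]; [lra | nra |].
  assert (Rabs L ^ 2 <= 1) by nra; nra.
Qed.

(** * Orbits, closures and one-sided limits *)

Lemma iterf_succ_r n (f : R -> R) x : iterf (S n) f x = iterf n f (f x).
Proof. induction n as [|n IH]; [reflexivity|]; simpl in *; now rewrite IH. Qed.

Lemma iterf_agree (f h : R -> R) (D : R -> Prop) n w :
  (forall z, D z -> f z = h z) -> (forall j, (j < n)%nat -> D (iterf j h w)) ->
  iterf n f w = iterf n h w.
Proof.
  intros Hfh; induction n as [|n IH]; intros Hj; [reflexivity|]; simpl.
  rewrite IH by (intros; apply Hj; lia); apply Hfh, Hj; lia.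
Qed.

Lemma continuous_iterf (h : R -> R) :
  (forall x, continuous h x) -> forall n x, continuous (iterf n h) x.
Proof.
  intros Hh n; induction n as [|n IH]; intro x; [apply continuous_id|].
  apply (continuous_comp (iterf n h) h); auto.
Qed.

Lemma in_closure_self (S : R -> Prop) y : S y -> in_closure S y.
Proof. intros Hy eps Heps; exists y; split; [exact Hy|]; rewrite Rminus_diag, Rabs_R0; exact Heps. Qed.

Lemma in_closure_limit {F : (R -> Prop) -> Prop} {FF : ProperFilter F} (S : R -> Prop) h l :
  filterlim h F (locally l) -> F (fun x => S (h x)) -> in_closure S l.
Proof.
  intros Hh HS eps Heps.
  assert (Hb : F (fun x => ball l (mkposreal eps Heps) (h x))) by apply Hh, locally_ball.
  destruct (Hierarchy.filter_ex _ (filter_and _ _ HS Hb)) as (x & Sx & Bx).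
  exists (h x); split; [exact Sx | exact Bx].
Qed.

Lemma in_closure_opp (S T : R -> Prop) y :
  (forall z, S z -> T (- z)) -> in_closure S y -> in_closure T (- y).
Proof.
  intros HST Hy eps Heps; destruct (Hy eps Heps) as (z & Hz & Hzy).
  exists (- z); split; [apply HST, Hz|].
  replace (- z - - y) with (- (z - y)) by ring; rewrite Rabs_Ropp; exact Hzy.
Qed.

Lemma at_right_between a c : a < c -> at_right a (fun x => a < x < c).
Proof.
  intros Hac; exists (mkposreal (c - a) ltac:(lra)); intros y Hy Hay.
  change (Rabs (y - a) < c - a) in Hy; apply Rabs_lt_between in Hy; lra.
Qed.

Lemma at_left_between a c : a < c -> at_left c (fun x => a < x < c).
Proof.
  intros Hac; exists (mkposreal (c - a) ltac:(lra)); intros y Hy Hyc.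
  change (Rabs (y - c) < c - a) in Hy; apply Rabs_lt_between in Hy; lra.
Qed.

Lemma continuous_within (D : R -> Prop) (h : R -> R) (x : R) :
  continuous h x -> filterlim h (within D (locally x)) (locally (h x)).
Proof. intros Hh; apply (filterlim_filter_le_1 (F := locally x)); [apply filter_le_within | exact Hh]. Qed.

Lemma limit_continuous_eq {F : (R -> Prop) -> Prop} {FF : ProperFilter F} (f h : R -> R) x l :
  filter_le F (locally x) -> continuous h x -> F (fun y => f y = h y) ->
  filterlim f F (locally l) -> h x = l.
Proof.
  intros HF Hh Efh Hf.
  apply (filterlim_locally_unique (K := R_AbsRing) (V := R_NormedModule) (F := F) h).
  - exact (filterlim_filter_le_1 _ HF Hh).
  - apply (filterlim_ext_loc f); [exact Efh | exact Hf].
Qed.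

Lemma closed_limit {F : (R -> Prop) -> Prop} {FF : ProperFilter F} (h : R -> R) x (D : R -> Prop) :
  filter_le F (locally x) -> continuous h x -> closed D -> F (fun y => D (h y)) -> D (h x).
Proof.
  intros HF Hh HD HFD; exact (closed_filterlim_loc h D (h x) (filterlim_filter_le_1 _ HF Hh) HFD HD).
Qed.

Lemma closed_interval_extension (h : R -> R) a c (D : R -> Prop) :
  a < c -> (forall x, continuous h x) -> closed D ->
  (forall x, a < x < c -> D (h x)) -> forall x, a <= x <= c -> D (h x).
Proof.
  intros Hac Hh HD Hin x Hx.
  destruct (Req_dec x a) as [->|Ha].
  { apply (closed_limit (F := at_right a)); auto; [apply filter_le_within|].
    apply (filter_imp _ _ Hin), at_right_between, Hac. }
  destruct (Req_dec x c) as [->|Hc].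
  { apply (closed_limit (F := at_left c)); auto; [apply filter_le_within|].
    apply (filter_imp _ _ Hin), at_left_between, Hac. }
  apply Hin; lra.
Qed.

Definition is_first_return (f : R -> R) (lo hi y : R) (r : nat) : Prop :=
  (1 <= r)%nat /\ lo <= iterf r f y <= hi /\
  (forall j, (1 <= j)%nat -> (j < r)%nat -> ~ (lo <= iterf j f y <= hi)).

Lemma first_return_unique (f : R -> R) lo hi y r r' :
  is_first_return f lo hi y r -> is_first_return f lo hi y r' -> r = r'.
Proof.
  intros (H1 & H2 & H3) (H1' & H2' & H3').
  destruct (Nat.lt_total r r') as [H|[H|H]]; [exfalso; exact (H3' r H1 H H2) | exact H |].
  exfalso; exact (H3 r' H1' H H2').
Qed.

(** * Gap maps with jet branches *)

Set Implicit Arguments.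

(* The branches of a gap map as jets on R; at 0 they take the one-sided limits of f. *)
Record gap_jets (f : R -> R) (b : R) (FL FR : jet) : Prop := {
  gj_b : 0 < b < 1;
  gj_jet_left : is_jet FL;
  gj_jet_right : is_jet FR;
  gj_eq_left : forall x, b - 1 <= x < 0 -> f x = jet0 FL x;
  gj_eq_right : forall x, 0 < x <= b -> f x = jet0 FR x;
  gj_left_0 : jet0 FL 0 = b;
  gj_right_0 : jet0 FR 0 = b - 1;
  gj_incr_left : forall x y, b - 1 <= x -> x < y -> y <= 0 -> jet0 FL x < jet0 FL y;
  gj_incr_right : forall x y, 0 <= x -> x < y -> y <= b -> jet0 FR x < jet0 FR y;
  gj_range_left : b - 1 <= jet0 FL (b - 1);
  gj_range_right : jet0 FR b <= b;
  gj_gap : jet0 FR b < jet0 FL (b - 1) }.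

Unset Implicit Arguments.

Definition jet_gap_map (f : R -> R) (b nu A T : R) : Prop :=
  exists FL FR, gap_jets f b FL FR /\
    (forall x, b - 1 <= x <= 0 -> jet_bound_at FL x nu A T) /\
    (forall x, 0 <= x <= b -> jet_bound_at FR x nu A T).

Lemma jet_gap_map_nonneg {f : R -> R} {b nu A T : R} :
  jet_gap_map f b nu A T -> 0 <= nu /\ 0 <= A /\ 0 <= T.
Proof.
  intros (FL & FR & Hgj & HL & _); pose proof (gj_b Hgj).
  apply (@jet_bound_at_nonneg FL 0), HL; lra.
Qed.

Lemma jet_gap_map_ext (f g : R -> R) b nu A T :
  (forall x, f x = g x) -> jet_gap_map f b nu A T -> jet_gap_map g b nu A T.
Proof.
  intros Efg (FL & FR & Hgj & HL & HR); exists FL, FR; split; [|split; assumption].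
  destruct Hgj; split; auto; intros x Hx; rewrite <- Efg; auto.
Qed.

Definition rescaled_first_return (f : R -> R) (lo hi : R) (g : R -> R) (b' : R) : Prop :=
  lo < hi /\ b' = hi / (hi - lo) /\
  forall x, b' - 1 <= x <= b' -> x <> 0 ->
    exists r, is_first_return f lo hi ((hi - lo) * x) r /\
      g x = iterf r f ((hi - lo) * x) / (hi - lo).

Lemma is_renormalization_spec (f : R -> R) b (g : R -> R) b' :
  is_renormalization f b g b' ->
  exists k left, renorm_type f b k left /\
    rescaled_first_return f (Iprime_lo f b k left) (Iprime_hi f b k left) g b'.
Proof.
  intros (k & left & (Htype & _) & Hlh & Hb' & Hret).
  exists k, left; split; [exact Htype|]; split; [exact Hlh|]; split; [exact Hb'|].
  intros x Hx Hx0; destruct (Hret x Hx Hx0) as (r & H1 & H2 & H3 & H4).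
  exists r; split; [split; [|split]|]; assumption.
Qed.

Lemma rescaled_first_return_branch (f : R -> R) lo hi (g : R -> R) b' (s : jet)
  (D : R -> Prop) r :
  rescaled_first_return f lo hi g b' ->
  (forall y, D y -> is_first_return f lo hi y r /\ iterf r f y = jet0 s y) ->
  forall x, b' - 1 <= x <= b' -> x <> 0 -> D ((hi - lo) * x) ->
  g x = jet0 (jet_rescale (hi - lo) s) x.
Proof.
  intros (_ & _ & Hret) Hs x Hx Hx0 HD.
  destruct (Hret x Hx Hx0) as (r' & Hr' & ->); destruct (Hs _ HD) as (Hr & E).
  rewrite (first_return_unique _ _ _ _ _ _ Hr' Hr), E; reflexivity.
Qed.

Lemma gap_jets_of_gap_map (f : R -> R) b (FL FR : R -> R) :
  gap_map f b -> C3 FL -> C3 FR ->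
  (forall x, left_branch b x -> f x = FL x) -> (forall x, right_branch b x -> f x = FR x) ->
  gap_jets f b (jet_of_C3 FL) (jet_of_C3 FR).
Proof.
  intros (Hb & _ & _ & mL & mR & limL & limR & gap & rng) CL CR EL ER.
  assert (FL0 : FL 0 = b).
  { apply (limit_continuous_eq (F := at_left 0) f); [apply filter_le_within | | |exact limL].
    - apply (is_jet_continuous _ (is_jet_of_C3 _ CL) 0).
    - apply (filter_imp (fun y => b - 1 < y < 0)); [|apply at_left_between; lra].
      intros y Hy; apply EL; unfold left_branch; lra. }
  assert (FR0 : FR 0 = b - 1).
  { apply (limit_continuous_eq (F := at_right 0) f); [apply filter_le_within | | |exact limR].
    - apply (is_jet_continuous _ (is_jet_of_C3 _ CR) 0).
    - apply (filter_imp (fun y => 0 < y < b)); [|apply at_right_between; lra].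
      intros y Hy; apply ER; unfold right_branch; lra. }
  assert (EL' : forall x, b - 1 <= x < 0 -> f x = FL x) by (intros; apply EL; unfold left_branch; lra).
  assert (ER' : forall x, 0 < x <= b -> f x = FR x) by (intros; apply ER; unfold right_branch; lra).
  split; cbn [jet0 jet_of_C3]; auto using is_jet_of_C3.
  - intros x y Hx Hxy Hy; rewrite <- (EL' x) by lra.
    destruct (Req_dec y 0) as [->|Hy0];
      [rewrite FL0 | rewrite <- (EL' y) by lra; apply mL; unfold left_branch; lra].
    pose proof (mL x (x / 2) ltac:(unfold left_branch; lra) ltac:(unfold left_branch; lra) ltac:(lra)).
    pose proof (rng (x / 2) ltac:(lra) ltac:(lra)); lra.
  - intros x y Hx Hxy Hy; rewrite <- (ER' y) by lra.
    destruct (Req_dec x 0) as [->|Hx0];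
      [rewrite FR0 | rewrite <- (ER' x) by lra; apply mR; unfold right_branch; lra].
    pose proof (mR (y / 2) y ltac:(unfold right_branch; lra) ltac:(unfold right_branch; lra) ltac:(lra)).
    pose proof (rng (y / 2) ltac:(lra) ltac:(lra)); lra.
  - rewrite <- EL' by lra; apply rng; lra.
  - rewrite <- ER' by lra; apply rng; lra.
  - rewrite <- EL', <- ER' by lra; exact gap.
Qed.

Lemma jet1_bound_closed (s : jet) a c nu :
  is_jet s -> a < c -> (forall x, a < x < c -> 0 < jet1 s x <= nu) ->
  forall x, a <= x <= c -> Rabs (jet1 s x) <= nu.
Proof.
  intros Hs Hac Hin x Hx.
  assert (0 <= jet1 s x <= nu).
  { apply (closed_interval_extension (jet1 s) a c (fun z => 0 <= z <= nu)); auto.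
    - apply (is_jet_continuous s Hs 1).
    - apply closed_and; [apply closed_ge | apply closed_le].
    - intros y Hy; specialize (Hin y Hy); lra. }
  rewrite Rabs_right; lra.
Qed.

Lemma jet_gap_map_of_dissipative (f : R -> R) b :
  C3_dissipative_gap_map f b -> exists nu A T, nu < 1 /\ jet_gap_map f b nu A T.
Proof.
  intros (Hgap & FL & FR & CL & CR & EL & ER & nu & Hnu & DL & DR).
  pose proof (gap_jets_of_gap_map f b FL FR Hgap CL CR EL ER) as Hgj.
  pose proof (gj_b Hgj).
  destruct (jet_bounds_on_interval _ (b - 1) 0 (gj_jet_left Hgj)) as (AL & TL & BL).
  destruct (jet_bounds_on_interval _ 0 b (gj_jet_right Hgj)) as (AR & TR & BR).
  exists nu, (Rmax AL AR), (Rmax TL TR); split; [exact Hnu|].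
  exists (jet_of_C3 FL), (jet_of_C3 FR); split; [exact Hgj|].
  pose proof (Rmax_l AL AR); pose proof (Rmax_r AL AR);
    pose proof (Rmax_l TL TR); pose proof (Rmax_r TL TR).
  split; intros x Hx; split; [| pose proof (BL x Hx); lra | | pose proof (BR x Hx); lra].
  - apply (jet1_bound_closed _ (b - 1) 0); auto; [apply Hgj | lra |].
    intros y Hy; apply DL; unfold left_branch; lra.
  - apply (jet1_bound_closed _ 0 b); auto; [apply Hgj | lra |].
    intros y Hy; apply DR; unfold right_branch; lra.
Qed.

(** * One renormalization step *)

Section LeftRenormalization.

Variables (f : R -> R) (b : R) (FL FR : jet) (k : nat).
Hypothesis Hgj : gap_jets f b FL FR.
Hypothesis Htype : renorm_type f b k true.

Local Notation fl := (jet0 FL).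
Local Notation fr := (jet0 FR).
(* [lo] and [hi] are the endpoints of I' ([Iprime_left]); the first return map is
   fl^k o fr o fl on [lo, 0) and fl^k o fr on (0, hi]. *)
Local Notation lo := (iterf k fl (b - 1)).
Local Notation hi := (iterf k fl (fr b)).

Lemma fl_le x y : b - 1 <= x -> x <= y -> y <= 0 -> fl x <= fl y.
Proof.
  intros Hx Hxy Hy; destruct (Req_dec x y) as [->|Hne]; [lra|].
  left; apply (gj_incr_left Hgj); lra.
Qed.

Lemma fr_le x y : 0 <= x -> x <= y -> y <= b -> fr x <= fr y.
Proof.
  intros Hx Hxy Hy; destruct (Req_dec x y) as [->|Hne]; [lra|].
  left; apply (gj_incr_right Hgj); lra.
Qed.

Lemma gap_bounds : b - 1 < fr b /\ fl (b - 1) < b.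
Proof.
  pose proof (gj_b Hgj).
  pose proof (gj_incr_right Hgj (x := 0) (y := b)).
  pose proof (gj_incr_left Hgj (x := b - 1) (y := 0)).
  rewrite (gj_right_0 Hgj) in *; rewrite (gj_left_0 Hgj) in *; split; lra.
Qed.

Lemma f_at_ends : f b = fr b /\ f (b - 1) = fl (b - 1).
Proof.
  pose proof (gj_b Hgj).
  split; [apply (gj_eq_right Hgj) | apply (gj_eq_left Hgj)]; lra.
Qed.

Lemma gap_image_fl i x :
  (i <= k)%nat -> fr b < x < fl (b - 1) -> iterf i f x = iterf i fl x.
Proof.
  intros Hi Hx; pose proof (gj_b Hgj).
  induction i as [|i IH]; [reflexivity|]; simpl.
  destruct Htype as (_ & Hpre & _).
  assert (Hin : in_closure (gap_image f b i) (iterf i f x)).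
  { apply in_closure_self; exists x; split; [|reflexivity].
    destruct f_at_ends as (-> & ->); exact Hx. }
  specialize (Hpre i ltac:(lia) _ Hin).
  rewrite <- IH by lia; apply (gj_eq_left Hgj); lra.
Qed.

Lemma continuous_fl x : continuous fl x.
Proof. exact (is_jet_continuous FL (gj_jet_left Hgj) 0 x). Qed.

Lemma gap_ends_closure i :
  (i <= k)%nat ->
  in_closure (gap_image f b i) (iterf i fl (fr b)) /\
  in_closure (gap_image f b i) (iterf i fl (fl (b - 1))).
Proof.
  intros Hi; pose proof (gj_gap Hgj) as Hgap.
  assert (HS : forall x, fr b < x < fl (b - 1) -> gap_image f b i (iterf i fl x)).
  { intros x Hx; exists x; destruct f_at_ends as (-> & ->).
    split; [exact Hx | symmetry; apply gap_image_fl; auto]. }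
  split.
  - apply (in_closure_limit (F := at_right (fr b)) _ (iterf i fl)).
    + apply continuous_within, continuous_iterf, continuous_fl.
    + apply (filter_imp _ _ HS), at_right_between, Hgap.
  - apply (in_closure_limit (F := at_left (fl (b - 1))) _ (iterf i fl)).
    + apply continuous_within, continuous_iterf, continuous_fl.
    + apply (filter_imp _ _ HS), at_left_between, Hgap.
Qed.

Lemma gap_ends_left i :
  (i < k)%nat -> b - 1 < iterf i fl (fr b) < 0 /\ b - 1 < iterf i fl (fl (b - 1)) < 0.
Proof.
  intros Hi; destruct Htype as (_ & Hpre & _); destruct (gap_ends_closure i) as (Ha & Hc); [lia|].
  split; [apply (Hpre i Hi _ Ha) | apply (Hpre i Hi _ Hc)].
Qed.

Lemma gap_ends_right : 0 < hi < b /\ 0 < iterf k fl (fl (b - 1)) < b.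
Proof.
  destruct Htype as (_ & _ & Hk); destruct (gap_ends_closure k) as (Ha & Hc); [lia|].
  split; [apply (Hk _ Ha) | apply (Hk _ Hc)].
Qed.

Lemma fl_iter_incr i :
  (i <= k)%nat ->
  (forall x y, b - 1 <= x -> x < y -> y <= fl (b - 1) -> iterf i fl x < iterf i fl y) /\
  (forall x, b - 1 <= x <= fl (b - 1) -> b - 1 <= iterf i fl x).
Proof.
  induction i as [|i IH]; intros Hi; [simpl; split; intros; lra|].
  destruct IH as (IM & IB); [lia|].
  assert (Hneg : forall x, b - 1 <= x <= fl (b - 1) -> iterf i fl x < 0).
  { intros x Hx; destruct (gap_ends_left i) as (_ & Hc); [lia|].
    destruct (Req_dec x (fl (b - 1))) as [->|Hne]; [lra|].
    specialize (IM x (fl (b - 1))); lra. }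
  split; simpl.
  - intros x y Hx Hxy Hy; apply (gj_incr_left Hgj).
    + apply IB; lra.
    + apply IM; lra.
    + left; apply Hneg; lra.
  - intros x Hx; pose proof (gj_range_left Hgj).
    pose proof (fl_le (b - 1) (iterf i fl x) ltac:(lra) (IB x Hx) ltac:(left; apply Hneg, Hx)).
    lra.
Qed.

Lemma fl_iter_hull i x :
  (i < k)%nat -> b - 1 <= x <= fl (b - 1) -> b - 1 <= iterf i fl x < 0.
Proof.
  intros Hi Hx; destruct (fl_iter_incr i) as (IM & IB); [lia|].
  split; [apply IB, Hx|]; destruct (gap_ends_left i Hi) as (_ & Hc).
  destruct (Req_dec x (fl (b - 1))) as [->|Hne]; [lra|].
  specialize (IM x (fl (b - 1))); lra.
Qed.

Lemma iterf_hull i w :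
  (i <= k)%nat -> b - 1 <= w <= fl (b - 1) -> iterf i f w = iterf i fl w.
Proof.
  intros Hi Hw; apply (iterf_agree _ _ (fun z => b - 1 <= z < 0)).
  - apply (gj_eq_left Hgj).
  - intros j Hj; apply fl_iter_hull; [lia | exact Hw].
Qed.

Lemma lo_spec : b - 1 < lo < 0 /\ fl lo = iterf k fl (fl (b - 1)).
Proof.
  destruct Htype as (Hk & _).
  assert (E : lo = iterf (pred k) fl (fl (b - 1))) by (rewrite <- iterf_succ_r; f_equal; lia).
  rewrite E; split; [apply gap_ends_left; lia|].
  change (iterf (S (pred k)) fl (fl (b - 1)) = iterf k fl (fl (b - 1))); f_equal; lia.
Qed.

Lemma hi_lt_fl_lo : hi < fl lo /\ 0 < fl lo < b.
Proof.
  destruct lo_spec as (_ & ->); destruct gap_ends_right as (_ & Hc); split; [|exact Hc].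
  pose proof gap_bounds; pose proof (gj_gap Hgj).
  apply (fl_iter_incr k); auto; lra.
Qed.

Lemma gap_orbit_below_lo j : (j < k)%nat -> iterf j fl (fr b) < lo.
Proof.
  (* Otherwise fl^(j+1) (fr b) >= fl lo, which is impossible both for j + 1 = k
     ([hi_lt_fl_lo]) and for j + 1 < k (then fl^(j+1) (fr b) < 0 < fl lo). *)
  intros Hj; destruct (Rlt_or_le (iterf j fl (fr b)) lo) as [|Hge]; [assumption|exfalso].
  pose proof gap_bounds; pose proof (gj_gap Hgj); pose proof lo_spec; pose proof hi_lt_fl_lo.
  pose proof (fl_iter_hull j (fr b) Hj ltac:(lra)).
  assert (Hle : fl lo <= fl (iterf j fl (fr b))) by (apply fl_le; lra).
  change (fl (iterf j fl (fr b))) with (iterf (S j) fl (fr b)) in Hle.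
  destruct (Nat.eq_dec (S j) k) as [<-|Hne]; [lra|].
  destruct (gap_ends_left (S j)); [lia | lra].
Qed.

Lemma below_gap_orbit w :
  b - 1 < w < fr b ->
  (forall j, (j < k)%nat -> b - 1 <= iterf j fl w < lo) /\ lo < iterf k fl w < hi.
Proof.
  intros Hw; pose proof (gj_gap Hgj); pose proof (gj_range_left Hgj).
  split.
  - intros j Hj; split; [apply fl_iter_hull; auto; lra|].
    pose proof (gap_orbit_below_lo j Hj).
    pose proof (proj1 (fl_iter_incr j ltac:(lia)) w (fr b) ltac:(lra) ltac:(lra) ltac:(lra)); lra.
  - destruct (fl_iter_incr k) as (IM & _); [lia|].
    split; apply IM; lra.
Qed.

Definition return_left : jet := jet_iter FL k (jet_comp FR FL).
Definition return_right : jet := jet_iter FL k FR.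

Lemma return_left_eq y : jet0 return_left y = iterf k fl (fr (fl y)).
Proof. unfold return_left; rewrite jet0_iter; reflexivity. Qed.

Lemma return_right_eq y : jet0 return_right y = iterf k fl (fr y).
Proof. apply jet0_iter. Qed.

Lemma left_piece_image y : lo <= y <= 0 -> fl lo <= fl y <= b /\ b - 1 < fr (fl y) <= fr b.
Proof.
  intros Hy; pose proof lo_spec; pose proof hi_lt_fl_lo; pose proof (gj_b Hgj).
  pose proof (fl_le lo y ltac:(lra) ltac:(lra) ltac:(lra)).
  pose proof (fl_le y 0 ltac:(lra) ltac:(lra) ltac:(lra)) as Hy0.
  rewrite (gj_left_0 Hgj) in Hy0.
  pose proof (gj_incr_right Hgj (x := 0) (y := fl y) ltac:(lra) ltac:(lra) ltac:(lra)) as H0y.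
  pose proof (fr_le (fl y) b ltac:(lra) ltac:(lra) ltac:(lra)).
  rewrite (gj_right_0 Hgj) in H0y; lra.
Qed.

Lemma right_piece_image y : 0 <= y <= hi -> b - 1 <= fr y <= fr b.
Proof.
  intros Hy; pose proof gap_ends_right.
  rewrite <- (gj_right_0 Hgj); split; apply fr_le; lra.
Qed.

Lemma first_return_left y :
  lo <= y < 0 -> is_first_return f lo hi y (S (S k)) /\ iterf (S (S k)) f y = jet0 return_left y.
Proof.
  intros Hy; pose proof lo_spec; pose proof hi_lt_fl_lo; pose proof (gj_b Hgj).
  pose proof (gj_gap Hgj); pose proof (gj_range_left Hgj).
  assert (Hfl : fl y < b) by (rewrite <- (gj_left_0 Hgj); apply (gj_incr_left Hgj); lra).
  destruct (left_piece_image y ltac:(lra)) as (Hly & Hry).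
  assert (Hw : b - 1 < fr (fl y) < fr b) by (split; [|apply (gj_incr_right Hgj)]; lra).
  assert (E : forall j, (j <= k)%nat -> iterf (S (S j)) f y = iterf j fl (fr (fl y))).
  { intros j Hj; rewrite !iterf_succ_r, (gj_eq_left Hgj (x := y)), (gj_eq_right Hgj (x := fl y))
      by lra.
    apply iterf_hull; auto; lra. }
  destruct (below_gap_orbit _ Hw) as (Hbelow & Hk).
  split; [|rewrite return_left_eq; apply E; lia].
  split; [lia|split; [rewrite E by lia; lra|]]; intros [|[|j]] Hj1 Hj2; [lia| |].
  - simpl; rewrite (gj_eq_left Hgj) by lra; lra.
  - rewrite E by lia; specialize (Hbelow j ltac:(lia)); lra.
Qed.

Lemma first_return_right y :
  0 < y <= hi -> is_first_return f lo hi y (S k) /\ iterf (S k) f y = jet0 return_right y.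
Proof.
  intros Hy; pose proof gap_ends_right; pose proof (gj_b Hgj).
  pose proof (gj_gap Hgj); pose proof (gj_range_left Hgj).
  assert (Hw : b - 1 < fr y < fr b).
  { rewrite <- (gj_right_0 Hgj); split; apply (gj_incr_right Hgj); lra. }
  assert (E : forall j, (j <= k)%nat -> iterf (S j) f y = iterf j fl (fr y)).
  { intros j Hj; rewrite iterf_succ_r, (gj_eq_right Hgj (x := y)) by lra.
    apply iterf_hull; auto; lra. }
  destruct (below_gap_orbit _ Hw) as (Hbelow & Hk).
  split; [|rewrite return_right_eq; apply E; lia].
  split; [lia|split; [rewrite E by lia; lra|]]; intros [|j] Hj1 Hj2; [lia|].
  rewrite E by lia; specialize (Hbelow j ltac:(lia)); lra.
Qed.

Lemma return_left_incr x y : lo <= x -> x < y -> y <= 0 -> jet0 return_left x < jet0 return_left y.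
Proof.
  intros Hx Hxy Hy; rewrite !return_left_eq.
  pose proof lo_spec; pose proof hi_lt_fl_lo; pose proof (gj_gap Hgj).
  destruct (left_piece_image x ltac:(lra)); destruct (left_piece_image y ltac:(lra)).
  apply (fl_iter_incr k); [lia | lra | | lra].
  apply (gj_incr_right Hgj); try lra; apply (gj_incr_left Hgj); lra.
Qed.

Lemma return_right_incr x y : 0 <= x -> x < y -> y <= hi -> jet0 return_right x < jet0 return_right y.
Proof.
  intros Hx Hxy Hy; rewrite !return_right_eq.
  pose proof gap_ends_right; pose proof (gj_gap Hgj).
  destruct (right_piece_image x ltac:(lra)); destruct (right_piece_image y ltac:(lra)).
  apply (fl_iter_incr k); [lia | lra | | lra].
  apply (gj_incr_right Hgj); lra.
Qed.

Lemma return_at_0 : jet0 return_left 0 = hi /\ jet0 return_right 0 = lo.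
Proof.
  rewrite return_left_eq, return_right_eq, (gj_left_0 Hgj), (gj_right_0 Hgj).
  split; reflexivity.
Qed.

Lemma return_gap : jet0 return_right hi < jet0 return_left lo.
Proof.
  rewrite return_left_eq, return_right_eq.
  pose proof lo_spec; pose proof hi_lt_fl_lo; pose proof gap_ends_right; pose proof (gj_gap Hgj).
  destruct (left_piece_image lo ltac:(lra)); destruct (right_piece_image hi ltac:(lra)).
  apply (fl_iter_incr k); [lia | lra | | lra].
  apply (gj_incr_right Hgj); lra.
Qed.

Lemma Iprime_left : Iprime_lo f b k true = lo /\ Iprime_hi f b k true = hi.
Proof.
  pose proof gap_bounds; pose proof (gj_gap Hgj); pose proof (gj_range_left Hgj).
  unfold Iprime_lo, Iprime_hi; rewrite iterf_succ_r, (proj1 f_at_ends).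
  split; apply iterf_hull; auto; lra.
Qed.

Lemma return_bounds nu A T c :
  nu <= 1 -> 1 <= c * (1 - nu) ->
  (forall x, b - 1 <= x <= 0 -> jet_bound_at FL x nu A T) ->
  (forall x, 0 <= x <= b -> jet_bound_at FR x nu A T) ->
  (forall x, lo <= x <= 0 ->
     jet_bound_at return_left x (nu * nu) (2 * c * A * nu) (2 * cone_bound3 c A T * nu)) /\
  (forall x, 0 <= x <= hi ->
     jet_bound_at return_right x (nu * nu) (2 * c * A * nu) (2 * cone_bound3 c A T * nu)).
Proof.
  intros Hnu Hc HL HR; destruct Htype as (Hk & _).
  pose proof lo_spec; pose proof hi_lt_fl_lo; pose proof gap_ends_right.
  pose proof (gj_gap Hgj); pose proof (gj_range_left Hgj).
  split; intros x Hx; apply jet_bound_at_iter_contract; auto.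
  - destruct (left_piece_image x Hx); intros j Hj; apply HL.
    pose proof (fl_iter_hull j (fr (fl x)) Hj ltac:(lra)); simpl; lra.
  - destruct (left_piece_image x Hx); apply jet_bound_at_comp_cone; auto.
    + apply HR; lra.
    + apply jet_bound_at_cone, HL; auto; lra.
  - destruct (right_piece_image x Hx); intros j Hj; apply HL.
    pose proof (fl_iter_hull j (fr x) Hj ltac:(lra)); lra.
  - apply jet_bound_at_cone, HR; auto; lra.
Qed.

Lemma gap_jets_renormalization_left (g : R -> R) b' :
  rescaled_first_return f lo hi g b' ->
  gap_jets g b' (jet_rescale (hi - lo) return_left) (jet_rescale (hi - lo) return_right).
Proof.
  intros Hren; pose proof Hren as (Hlh & Hb' & _).
  pose proof lo_spec; pose proof hi_lt_fl_lo; pose proof gap_ends_right.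
  pose proof (gj_b Hgj); pose proof return_at_0; pose proof return_gap.
  destruct (first_return_left lo ltac:(lra)) as ((_ & Hlo & _) & Elo).
  destruct (first_return_right hi ltac:(lra)) as ((_ & Hhi & _) & Ehi).
  assert (HLb : (hi - lo) * b' = hi) by (rewrite Hb'; field; lra).
  assert (HLb1 : (hi - lo) * (b' - 1) = lo) by lra.
  assert (HLi : 0 < / (hi - lo)) by (apply Rinv_0_lt_compat; lra).
  assert (Hb'01 : 0 < b' < 1) by nra.
  split; cbn [jet0 jet_rescale].
  - exact Hb'01.
  - apply is_jet_rescale; [lra|]; apply is_jet_iter, is_jet_comp; apply Hgj.
  - apply is_jet_rescale; [lra|]; apply is_jet_iter; apply Hgj.
  - intros x Hx; apply (rescaled_first_return_branch f lo hi g b' return_left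
      (fun y => lo <= y < 0) (S (S k)) Hren first_return_left); [lra | lra | nra].
  - intros x Hx; apply (rescaled_first_return_branch f lo hi g b' return_right
      (fun y => 0 < y <= hi) (S k) Hren first_return_right); [lra | lra | nra].
  - rewrite Rmult_0_r, (proj1 return_at_0), Hb'; reflexivity.
  - rewrite Rmult_0_r, (proj2 return_at_0); apply (Rmult_eq_reg_l (hi - lo)); [|lra].
    rewrite HLb1; field; lra.
  - intros x y Hx Hxy Hy; apply Rmult_lt_compat_r; [exact HLi|]; apply return_left_incr; nra.
  - intros x y Hx Hxy Hy; apply Rmult_lt_compat_r; [exact HLi|]; apply return_right_incr; nra.
  - rewrite HLb1; apply (Rmult_le_reg_l (hi - lo)); [lra|]; rewrite HLb1; field_simplify; lra.
  - rewrite HLb; apply (Rmult_le_reg_l (hi - lo)); [lra|]; rewrite HLb; field_simplify; lra.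
  - rewrite HLb, HLb1; apply Rmult_lt_compat_r; [exact HLi | exact return_gap].
Qed.

End LeftRenormalization.

Lemma jet_gap_map_renormalization_left (f g : R -> R) b b' k nu A T c :
  nu <= 1 -> 1 <= c * (1 - nu) ->
  jet_gap_map f b nu A T -> renorm_type f b k true ->
  rescaled_first_return f (Iprime_lo f b k true) (Iprime_hi f b k true) g b' ->
  jet_gap_map g b' (nu * nu) (2 * c * A * nu) (2 * cone_bound3 c A T * nu).
Proof.
  intros Hnu Hc (FL & FR & Hgj & HL & HR) Htype Hren.
  destruct (Iprime_left f b FL FR k Hgj Htype) as (Elo & Ehi); rewrite Elo, Ehi in Hren.
  destruct (return_bounds f b FL FR k Hgj Htype nu A T c Hnu Hc HL HR) as (BL & BR).
  pose proof (lo_spec f b FL FR k Hgj Htype); pose proof (gap_ends_right f b FL FR k Hgj Htype).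
  set (lo := iterf k (jet0 FL) (b - 1)) in *; set (hi := iterf k (jet0 FL) (jet0 FR b)) in *.
  pose proof (gj_b Hgj); pose proof Hren as (Hlh & Hb' & _).
  assert (HLb : (hi - lo) * b' = hi) by (rewrite Hb'; field; lra).
  assert (HL1 : Rabs (hi - lo) <= 1) by (rewrite Rabs_right; lra).
  exists (jet_rescale (hi - lo) (return_left FL FR k)),
    (jet_rescale (hi - lo) (return_right FL FR k)).
  split; [exact (gap_jets_renormalization_left f b FL FR k Hgj Htype g b' Hren)|].
  split; intros x Hx; apply jet_bound_at_rescale; auto; [apply BL | apply BR]; nra.
Qed.

Definition reflect (f : R -> R) : R -> R := fun x => - f (- x).

Lemma iterf_reflect n (f : R -> R) x : iterf n (reflect f) x = - iterf n f (- x).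
Proof.
  induction n as [|n IH]; simpl; [ring|].
  rewrite IH; unfold reflect; rewrite Ropp_involutive; reflexivity.
Qed.

Lemma gap_cl_in_reflect (f : R -> R) b i lo hi lo' hi' :
  lo' = - hi -> hi' = - lo -> gap_cl_in f b i lo hi -> gap_cl_in (reflect f) (1 - b) i lo' hi'.
Proof.
  intros -> -> Hcl y Hy.
  enough (lo < - y < hi) by lra.
  apply Hcl; revert Hy; apply in_closure_opp.
  intros z (x & Hx & ->); exists (- x); unfold reflect in Hx.
  replace (- (1 - b)) with (b - 1) in Hx by ring; replace (- (1 - b - 1)) with b in Hx by ring.
  rewrite iterf_reflect, !Ropp_involutive; split; [lra | reflexivity].
Qed.

Lemma renorm_type_reflect (f : R -> R) b k :
  renorm_type f b k false -> renorm_type (reflect f) (1 - b) k true.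
Proof.
  intros (Hk & Hpre & Hk_cl); split; [exact Hk|]; split.
  - intros i Hi; apply (gap_cl_in_reflect f b i 0 b); [ring | ring | apply Hpre, Hi].
  - apply (gap_cl_in_reflect f b k (b - 1) 0); [ring | ring | exact Hk_cl].
Qed.

Lemma Iprime_reflect (f : R -> R) b k :
  Iprime_lo (reflect f) (1 - b) k true = - Iprime_hi f b k false /\
  Iprime_hi (reflect f) (1 - b) k true = - Iprime_lo f b k false.
Proof.
  unfold Iprime_lo, Iprime_hi; rewrite !iterf_reflect.
  replace (- (1 - b - 1)) with b by ring; replace (- (1 - b)) with (b - 1) by ring.
  split; reflexivity.
Qed.

Lemma is_first_return_reflect (f : R -> R) lo hi y r :
  is_first_return f lo hi (- y) r -> is_first_return (reflect f) (- hi) (- lo) y r.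
Proof.
  intros (Hr & Hin & Hout); split; [exact Hr|]; rewrite iterf_reflect; split; [lra|].
  intros j Hj1 Hj2; rewrite iterf_reflect; specialize (Hout j Hj1 Hj2); lra.
Qed.

Lemma rescaled_first_return_reflect (f g : R -> R) lo hi b' :
  rescaled_first_return f lo hi g b' ->
  rescaled_first_return (reflect f) (- hi) (- lo) (reflect g) (1 - b').
Proof.
  intros (Hlh & Hb' & Hret); unfold rescaled_first_return.
  replace (- lo - - hi) with (hi - lo) by ring.
  split; [lra|]; split; [rewrite Hb'; field; lra|].
  intros x Hx Hx0; destruct (Hret (- x) ltac:(lra) ltac:(lra)) as (r & Hr & Eg).
  rewrite <- Ropp_mult_distr_r in Hr, Eg.
  exists r; split; [exact (is_first_return_reflect _ _ _ _ _ Hr)|].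
  unfold reflect at 1; rewrite Eg, iterf_reflect; field; lra.
Qed.

Lemma jet0_reflect (s : jet) x : jet0 (jet_rescale (-1) s) x = - jet0 s (- x).
Proof. cbn [jet0 jet_rescale]; replace (-1 * x) with (- x) by ring; field. Qed.

Lemma gap_jets_reflect (f : R -> R) b FL FR :
  gap_jets f b FL FR -> gap_jets (reflect f) (1 - b) (jet_rescale (-1) FR) (jet_rescale (-1) FL).
Proof.
  intros Hgj; pose proof (gj_b Hgj); pose proof (gj_range_left Hgj);
    pose proof (gj_range_right Hgj); pose proof (gj_gap Hgj).
  assert (Hm1 : -1 <> 0) by lra.
  split; rewrite ?jet0_reflect; unfold reflect.
  - lra.
  - apply is_jet_rescale; [exact Hm1 | apply Hgj].
  - apply is_jet_rescale; [exact Hm1 | apply Hgj].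
  - intros x Hx; rewrite jet0_reflect, (gj_eq_right Hgj); [reflexivity | lra].
  - intros x Hx; rewrite jet0_reflect, (gj_eq_left Hgj); [reflexivity | lra].
  - rewrite Ropp_0, (gj_right_0 Hgj); ring.
  - rewrite Ropp_0, (gj_left_0 Hgj); ring.
  - intros x y Hx Hxy Hy; rewrite !jet0_reflect; apply Ropp_lt_contravar.
    apply (gj_incr_right Hgj); lra.
  - intros x y Hx Hxy Hy; rewrite !jet0_reflect; apply Ropp_lt_contravar.
    apply (gj_incr_left Hgj); lra.
  - replace (- (1 - b - 1)) with b by ring; lra.
  - replace (- (1 - b)) with (b - 1) by ring; lra.
  - replace (- (1 - b - 1)) with b by ring; replace (- (1 - b)) with (b - 1) by ring; lra.
Qed.

Lemma jet_gap_map_reflect (f : R -> R) b nu A T :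
  jet_gap_map f b nu A T -> jet_gap_map (reflect f) (1 - b) nu A T.
Proof.
  intros (FL & FR & Hgj & HL & HR).
  exists (jet_rescale (-1) FR), (jet_rescale (-1) FL); split; [apply gap_jets_reflect, Hgj|].
  assert (Hm1 : Rabs (-1) <= 1) by (rewrite Rabs_left; lra).
  split; intros x Hx; apply jet_bound_at_rescale; auto; [apply HR | apply HL]; lra.
Qed.

Lemma jet_gap_map_renormalization (f g : R -> R) b b' k left nu A T c :
  nu <= 1 -> 1 <= c * (1 - nu) ->
  jet_gap_map f b nu A T -> renorm_type f b k left ->
  rescaled_first_return f (Iprime_lo f b k left) (Iprime_hi f b k left) g b' ->
  jet_gap_map g b' (nu * nu) (2 * c * A * nu) (2 * cone_bound3 c A T * nu).
Proof.
  intros Hnu Hc Hf Htype Hren; destruct left;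
    [exact (jet_gap_map_renormalization_left f g b b' k nu A T c Hnu Hc Hf Htype Hren)|].
  apply (jet_gap_map_ext (reflect (reflect g))); [intro; unfold reflect; rewrite !Ropp_involutive; reflexivity|].
  replace b' with (1 - (1 - b')) by ring; apply jet_gap_map_reflect.
  apply (jet_gap_map_renormalization_left (reflect f) _ (1 - b) _ k); auto.
  - apply jet_gap_map_reflect, Hf.
  - apply renorm_type_reflect, Htype.
  - destruct (Iprime_reflect f b k) as (-> & ->); apply rescaled_first_return_reflect, Hren.
Qed.

(** * Decay of the derivative bounds *)

Record deriv_bounds := DerivBounds { db1 : R; db2 : R; db3 : R }.

Definition renorm_step (c : R) (β : deriv_bounds) : deriv_bounds :=
  DerivBounds (db1 β * db1 β) (2 * c * db2 β * db1 β) (2 * cone_bound3 c (db2 β) (db3 β) * db1 β).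

Lemma pow_le_one x n : 0 <= x <= 1 -> x ^ n <= 1.
Proof. intros Hx; rewrite <- (pow1 n); apply pow_incr; exact Hx. Qed.

Lemma renorm_step_iter_nonneg c β n :
  0 <= c -> 0 <= db1 β <= 1 -> 0 <= db2 β -> 0 <= db3 β ->
  let β' := Nat.iter n (renorm_step c) β in
  0 <= db1 β' <= db1 β ^ S n /\ 0 <= db2 β' /\ 0 <= db3 β'.
Proof.
  intros Hc Hnu HA HT; induction n as [|n IH]; simpl in *; [lra|].
  destruct IH as ((Hn0 & Hn1) & HAn & HTn).
  set (β' := Nat.iter n (renorm_step c) β) in *.
  assert (Hpow : db1 β * db1 β ^ n <= 1) by exact (pow_le_one _ (S n) Hnu).
  unfold cone_bound3; split; [split|split].
  - nra.
  - pose proof (pow_le_one _ n Hnu).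
    assert (db1 β' <= db1 β) by (pose proof (pow_le_pos := pow_le (db1 β) n); nra).
    apply Rmult_le_compat; lra.
  - repeat apply Rmult_le_pos; lra.
  - assert (0 <= c * db2 β' * db2 β') by (repeat apply Rmult_le_pos; lra).
    repeat apply Rmult_le_pos; lra.
Qed.

Lemma jet_gap_map_renormalization_iter (F : nat -> R -> R) (B : nat -> R) nu A T :
  nu < 1 -> jet_gap_map (F O) (B O) nu A T ->
  (forall n, is_renormalization (F n) (B n) (F (S n)) (B (S n))) ->
  forall n, let β := Nat.iter n (renorm_step (/ (1 - nu))) (DerivBounds nu A T) in
    jet_gap_map (F n) (B n) (db1 β) (db2 β) (db3 β).
Proof.
  intros Hnu HG0 Hren n; destruct (jet_gap_map_nonneg HG0) as (Hnu0 & HA & HT).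
  set (c := / (1 - nu)).
  assert (Hc : c * (1 - nu) = 1) by (unfold c; field; lra).
  assert (Hc0 : 0 <= c) by (left; apply Rinv_0_lt_compat; lra).
  induction n as [|n IH]; [exact HG0|]; cbv zeta in *.
  destruct (is_renormalization_spec _ _ _ _ (Hren n)) as (k & left & Htype & Hret).
  destruct (renorm_step_iter_nonneg c (DerivBounds nu A T) n) as ((Hn0 & Hn1) & _);
    simpl; try lra.
  set (β := Nat.iter n (renorm_step c) (DerivBounds nu A T)) in *; simpl in Hn1.
  assert (nu * nu ^ n <= nu * 1) by (apply Rmult_le_compat_l; [|apply pow_le_one]; lra).
  assert (Hnu1 : db1 β <= 1) by lra.
  assert (Hcnu : 1 <= c * (1 - db1 β)) by nra.
  exact (jet_gap_map_renormalization _ _ _ _ k left _ _ _ c Hnu1 Hcnu IH Htype Hret).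
Qed.

Lemma eventually_small_of_contraction (u r : nat -> R) :
  (forall n, 0 <= u n) -> (forall n, u (S n) <= r n * u n) ->
  (exists N, forall n, (N <= n)%nat -> r n <= 1 / 2) ->
  forall eps, 0 < eps -> exists N, forall n, (N <= n)%nat -> u n <= eps.
Proof.
  intros Hu Hur (N & HN) eps Heps.
  assert (Hdec : forall m, u (N + m)%nat <= u N * (1 / 2) ^ m).
  { induction m as [|m IH]; [rewrite Nat.add_0_r; simpl; lra|].
    rewrite Nat.add_succ_r; eapply Rle_trans; [apply Hur|].
    specialize (HN (N + m)%nat ltac:(lia)); pose proof (Hu (N + m)%nat).
    simpl; nra. }
  destruct (pow_lt_1_zero (1 / 2) ltac:(rewrite Rabs_right; lra) (eps / (u N + 1)))
    as (M & HM); [apply Rdiv_lt_0_compat; pose proof (Hu N); lra|].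
  exists (N + M)%nat; intros n Hn.
  replace n with (N + (n - N))%nat by lia; eapply Rle_trans; [apply Hdec|].
  specialize (HM (n - N)%nat ltac:(lia)); rewrite Rabs_right in HM by (apply Rle_ge, pow_le; lra).
  pose proof (Hu N); assert (u N * (1 / 2) ^ (n - N) <= u N * (eps / (u N + 1))) by
    (apply Rmult_le_compat_l; lra).
  assert (u N * (eps / (u N + 1)) <= eps); [|lra].
  apply (Rmult_le_reg_r (u N + 1)); [lra|]; field_simplify; nra.
Qed.

(* A and T do not contract separately, since T picks up A^2, but A + T + A^2 does. *)
Definition bound_size (β : deriv_bounds) : R := db2 β + db3 β + db2 β * db2 β.

Lemma bound_size_renorm_step c β :
  1 <= c -> 0 <= db1 β <= 1 -> 0 <= db2 β -> 0 <= db3 β ->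
  bound_size (renorm_step c β) <= 10 * c * c * db1 β * bound_size β.
Proof.
  intros Hc Hnu HA HT; destruct β as [nu A T].
  unfold bound_size; cbn [db1 db2 db3 renorm_step] in *; unfold cone_bound3.
  assert (HAA : 0 <= c * c * A * A * nu) by (repeat apply Rmult_le_pos; lra).
  assert (nu * (c * A) <= nu * (c * (c * A))).
  { apply Rmult_le_compat_l; [lra|]; rewrite <- (Rmult_1_l (c * A)) at 1.
    apply Rmult_le_compat_r; [apply Rmult_le_pos|]; lra. }
  assert (nu * (c * T) <= nu * (c * (c * T))).
  { apply Rmult_le_compat_l; [lra|]; rewrite <- (Rmult_1_l (c * T)) at 1.
    apply Rmult_le_compat_r; [apply Rmult_le_pos|]; lra. }
  assert (c * c * A * A * nu * nu <= c * c * A * A * nu * 1) by (apply Rmult_le_compat_l; lra).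
  assert (0 <= nu * (c * (c * A))) by (repeat apply Rmult_le_pos; lra).
  assert (0 <= nu * (c * (c * T))) by (repeat apply Rmult_le_pos; lra).
  nra.
Qed.

Lemma renorm_step_iter_vanish c β :
  1 <= c -> 0 <= db1 β < 1 -> 0 <= db2 β -> 0 <= db3 β ->
  forall eps, 0 < eps -> exists N, forall n, (N <= n)%nat ->
    let β' := Nat.iter n (renorm_step c) β in db1 β' <= eps /\ db2 β' <= eps /\ db3 β' <= eps.
Proof.
  intros Hc Hnu HA HT eps Heps.
  set (bs n := Nat.iter n (renorm_step c) β).
  assert (Hbs : forall n, 0 <= db1 (bs n) <= db1 β ^ S n /\ 0 <= db2 (bs n) /\ 0 <= db3 (bs n))
    by (intro; apply renorm_step_iter_nonneg; lra).
  set (K := 10 * c * c).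
  assert (HK : 0 < K) by (unfold K; nra).
  destruct (pow_lt_1_zero (db1 β) ltac:(rewrite Rabs_right; lra) (Rmin eps (1 / (2 * K))))
    as (N1 & HN1); [apply Rmin_pos; [lra | apply Rdiv_lt_0_compat; lra]|].
  assert (Hnu_small : forall n, (N1 <= n)%nat -> db1 (bs n) <= Rmin eps (1 / (2 * K))).
  { intros n Hn; specialize (HN1 n Hn); rewrite Rabs_right in HN1 by (apply Rle_ge, pow_le; lra).
    destruct (Hbs n) as ((_ & Hle) & _); simpl in Hle.
    assert (db1 β * db1 β ^ n <= 1 * db1 β ^ n) by (apply Rmult_le_compat_r; [apply pow_le|]; lra).
    lra. }
  destruct (eventually_small_of_contraction (fun n => bound_size (bs n)) (fun n => K * db1 (bs n)))
    with (eps := eps) as (N2 & HN2); auto.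
  - intro n; destruct (Hbs n) as (_ & HAn & HTn); unfold bound_size; nra.
  - intro n; destruct (Hbs n) as ((Hn0 & Hn1) & HAn & HTn).
    pose proof (pow_le_one _ (S n) (conj (proj1 Hnu) (Rlt_le _ _ (proj2 Hnu)))).
    apply bound_size_renorm_step; auto; lra.
  - exists N1; intros n Hn; specialize (Hnu_small n Hn); pose proof (Rmin_r eps (1 / (2 * K))).
    apply Rle_trans with (K * (1 / (2 * K))); [apply Rmult_le_compat_l; lra | right; field; lra].
  - exists (Nat.max N1 N2); intros n Hn; cbv zeta; fold (bs n).
    specialize (Hnu_small n ltac:(lia)); specialize (HN2 n ltac:(lia)).
    pose proof (Rmin_l eps (1 / (2 * K))); destruct (Hbs n) as (_ & HAn & HTn).
    unfold bound_size in HN2; split; [lra|]; split; nra.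
Qed.

(** * Affine approximation *)

Definition affine_gap (s b x : R) : R := if Rlt_dec x 0 then s * x + b else s * x + b - 1.

Lemma affine_gap_left s b x : x < 0 -> affine_gap s b x = s * x + b.
Proof. intros Hx; unfold affine_gap; destruct (Rlt_dec x 0); [reflexivity | lra]. Qed.

Lemma affine_gap_right s b x : 0 < x -> affine_gap s b x = s * x + b - 1.
Proof. intros Hx; unfold affine_gap; destruct (Rlt_dec x 0); [lra | reflexivity]. Qed.

Lemma affine_limit (F : (R -> Prop) -> Prop) {FF : Filter F} (g : R -> R) s v :
  filter_le F (locally 0) -> F (fun x => g x = s * x + v) -> filterlim g F (locally v).
Proof.
  intros HF Hg; apply (filterlim_ext_loc (fun x => s * x + v)); [apply (filter_imp _ _ (fun x H => eq_sym H) Hg)|].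
  apply (filterlim_filter_le_1 _ HF).
  assert (Hc : continuous (fun x => s * x + v) 0) by split_continuity.
  replace (locally v) with (locally (s * 0 + v)) by (f_equal; ring); exact Hc.
Qed.

Lemma cont_within_affine (D : R -> Prop) (g : R -> R) s v x :
  0 <= s <= 1 -> (forall y, D y -> g y = s * y + v) -> D x -> cont_within D g x.
Proof.
  intros Hs Hg Hx eps Heps; exists eps; split; [exact Heps|]; intros y Hy Hyx.
  rewrite !Hg by assumption; replace (s * y + v - (s * x + v)) with (s * (y - x)) by ring.
  rewrite Rabs_mult, Rabs_right by lra; pose proof (Rabs_pos (y - x)); nra.
Qed.

Lemma affine_gap_map_affine_gap s b : 0 < s < 1 -> 0 < b < 1 -> affine_gap_map (affine_gap s b) b.
Proof.
  intros Hs Hb.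
  assert (EL : forall x, left_branch b x -> affine_gap s b x = s * x + b)
    by (intros x Hx; apply affine_gap_left; unfold left_branch in Hx; lra).
  assert (ER : forall x, right_branch b x -> affine_gap s b x = s * x + (b - 1))
    by (intros x Hx; rewrite affine_gap_right; [ring | unfold right_branch in Hx; lra]).
  split; [|exists s, b, s, (b - 1); split; assumption].
  split; [exact Hb|]; split; [|split; [|split; [|split; [|split; [|split; [|split]]]]]].
  - intros x Hx; apply (cont_within_affine _ _ s b); auto; lra.
  - intros x Hx; apply (cont_within_affine _ _ s (b - 1)); auto; lra.
  - intros x y Hx Hy Hxy; rewrite !EL by assumption; nra.
  - intros x y Hx Hy Hxy; rewrite !ER by assumption; nra.
  - apply (affine_limit _ _ s); [apply filter_le_within|].
    apply (filter_imp (fun x => b - 1 < x < 0)); [|apply at_left_between; lra].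
    intros x Hx; apply EL; unfold left_branch; lra.
  - apply (affine_limit _ _ s); [apply filter_le_within|].
    apply (filter_imp (fun x => 0 < x < b)); [|apply at_right_between; lra].
    intros x Hx; apply ER; unfold right_branch; lra.
  - rewrite (EL (b - 1)), (ER b) by (unfold left_branch, right_branch; lra); nra.
  - intros x Hx Hx0; destruct (Rlt_or_le x 0).
    + rewrite EL by (unfold left_branch; lra); nra.
    + rewrite ER by (unfold right_branch; lra); nra.
Qed.

Lemma jet_sub_affine_small (s : jet) a c v nu A T sl eps :
  is_jet s -> a <= 0 <= c -> c - a <= 1 -> jet0 s 0 = v ->
  (forall x, a <= x <= c -> jet_bound_at s x nu A T) ->
  0 <= sl -> nu + sl <= eps -> A <= eps -> T <= eps ->
  forall j x, (j <= 3)%nat -> a <= x <= c ->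
  Rabs (Derive_n (jet0 (jet_sub_affine s sl v)) j x) <= eps.
Proof.
  intros Hs Hac Hlen Hv Hb Hsl Heps HA HT j x Hj Hx.
  rewrite Derive_n_jet by (try apply is_jet_sub_affine; auto).
  destruct (Hb x Hx) as (B1 & B2 & B3).
  destruct j as [|[|[|[|j]]]]; cbn [jet_nth jet0 jet1 jet2 jet3 jet_sub_affine]; try lra.
  - replace (jet0 s x - (sl * x + v)) with ((jet0 s x - jet0 s 0) - sl * x) by (rewrite Hv; ring).
    assert (Hx1 : Rabs x <= 1) by (apply Rabs_le_between; lra).
    pose proof (jet_lipschitz s a c nu x 0 Hs (fun t Ht => proj1 (Hb t Ht)) Hx ltac:(lra)).
    rewrite Rminus_0_r in *.
    eapply Rle_trans; [apply Rabs_triang|]; rewrite Rabs_Ropp, Rabs_mult, (Rabs_right sl) by lra.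
    pose proof (Rabs_pos (jet1 s x)).
    assert (nu * Rabs x <= nu * 1) by (apply Rmult_le_compat_l; lra).
    assert (sl * Rabs x <= sl * 1) by (apply Rmult_le_compat_l; lra).
    lra.
  - eapply Rle_trans; [apply Rabs_triang|]; rewrite Rabs_Ropp, (Rabs_right sl) by lra; lra.
Qed.

Lemma affine_approximation (f : R -> R) b nu A T eps :
  jet_gap_map f b nu A T -> 0 < eps -> nu <= eps / 2 -> A <= eps -> T <= eps ->
  exists g, affine_gap_map g b /\ C3_dist_le f g b eps.
Proof.
  intros (FL & FR & Hgj & HL & HR) Heps Hnu HA HT.
  pose proof (gj_b Hgj).
  assert (Hsl : 0 < Rmin (eps / 2) (1 / 2) <= eps / 2 /\ Rmin (eps / 2) (1 / 2) < 1).
  { pose proof (Rmin_l (eps / 2) (1 / 2)); pose proof (Rmin_r (eps / 2) (1 / 2)).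
    split; [split; [apply Rmin_pos|]|]; lra. }
  set (sl := Rmin (eps / 2) (1 / 2)) in *.
  exists (affine_gap sl b); split; [apply affine_gap_map_affine_gap; lra|].
  exists (jet0 (jet_sub_affine FL sl b)), (jet0 (jet_sub_affine FR sl (b - 1))).
  split; [apply is_jet_C3, is_jet_sub_affine, Hgj|].
  split; [apply is_jet_C3, is_jet_sub_affine, Hgj|].
  split; [|split; [|split]].
  - intros x Hx; unfold left_branch in Hx; cbn [jet0 jet_sub_affine].
    rewrite affine_gap_left, (gj_eq_left Hgj) by lra; reflexivity.
  - intros x Hx; unfold right_branch in Hx; cbn [jet0 jet_sub_affine].
    rewrite affine_gap_right, (gj_eq_right Hgj) by lra; ring.
  - intros j x Hj Hx; apply (jet_sub_affine_small _ (b - 1) 0 _ nu A T); auto; try lra.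
    + apply Hgj.
    + apply Hgj.
  - intros j x Hj Hx; apply (jet_sub_affine_small _ 0 b _ nu A T); auto; try lra.
    + apply Hgj.
    + apply Hgj.
Qed.

Theorem mainTheorem4 (f : R -> R) (b : R)
  (Hf : C3_dissipative_gap_map f b)
  (F : nat -> R -> R) (B : nat -> R)
  (HF0 : F O = f) (HB0 : B O = b)
  (Hren : forall n : nat, is_renormalization (F n) (B n) (F (S n)) (B (S n))) :
  forall eps : R, 0 < eps ->
  exists n0 : nat, forall n : nat, (n0 <= n)%nat ->
    exists g : R -> R, affine_gap_map g (B n) /\ C3_dist_le (F n) g (B n) eps.
Proof.
  intros eps Heps.
  destruct (jet_gap_map_of_dissipative f b Hf) as (nu & A & T & Hnu & HG0).
  destruct (jet_gap_map_nonneg HG0) as (Hnu0 & HA & HT).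
  rewrite <- HF0, <- HB0 in HG0.
  pose proof (jet_gap_map_renormalization_iter F B nu A T Hnu HG0 Hren) as HG.
  destruct (renorm_step_iter_vanish (/ (1 - nu)) (DerivBounds nu A T)) with (eps := eps / 2)
    as (N & HN); simpl; try lra.
  { rewrite <- Rinv_1; apply Rinv_le_contravar; lra. }
  exists N; intros n Hn; destruct (HN n Hn) as (H1 & H2 & H3).
  apply (affine_approximation _ _ _ _ _ _ (HG n)); lra.
Qed.
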